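(* Assume the standing setting in the context, and assume that for every $\boldsymbol a\in\mathrm{Dom}(\boldsymbol A)$, $\Pr^+_\Omega(h(\boldsymbol x)\mid s_1,\boldsymbol a)\ge \Pr^+_\Omega(h(\boldsymbol x)\mid s_0,\boldsymbol a)$. Let $\boldsymbol U\subseteq \boldsymbol X\cup\{Y\}$ be any set of variables such that, under $\Omega$, $(\boldsymbol X\perp\!\!\!\perp C\mid S,\boldsymbol A,\boldsymbol U)$, and assume $\Omega(S=s,\boldsymbol A=\boldsymbol a,\boldsymbol U=\boldsymbol u, C=1)>0$ for all $s,\boldsymbol a,\boldsymbol u$. Then $$0\le \digamma(\Omega)\le \frac{1}{|\mathrm{Dom}(\boldsymbol A)|}\sum_{\boldsymbol a\in\mathrm{Dom}(\boldsymbol A)}\Big(\max_{\boldsymbol u\in\mathrm{Dom}(\boldsymbol U)}\Pr^+_\Delta(h(\boldsymbol x)\mid s_1,\boldsymbol a,\boldsymbol u)-\min_{\boldsymbol u\in\mathrm{Dom}(\boldsymbol U)}\Pr^+_\Delta(h(\boldsymbol x)\mid s_0,\boldsymbol a,\boldsymbol u)\Big).$$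
   Context: Standing setting. All variables have finite domains. $\boldsymbol X=(X_1,\dots,X_n)$ is a vector of features, $Y\in\{0,1\}$ is the label, and $C\in\{0,1\}$ is a selection indicator. $\Omega$ is a joint distribution of $(\boldsymbol X,Y,C)$; its marginal on $(\boldsymbol X,Y)$ is the target population. The biased distribution is $\Delta(\boldsymbol x,y)=\Omega(\boldsymbol x,y\mid C=1)$. A protected attribute $S$ is one of the features, with $\mathrm{Dom}(S)=\{s_0,s_1\}$. A set of admissible attributes $\boldsymbol A\subseteq \boldsymbol X\cup\{Y\}$ with $S\notin\boldsymbol A$ is fixed. A classifier is a function $h:\mathrm{Dom}(\boldsymbol X)\to\{0,1\}$. For a distribution $P$ and an event $E$, write $\Pr^+_P(h(\boldsymbol x)\mid E)=P(h(\boldsymbol X)=1\mid E)$; conditioning on $s,\boldsymbol a,\boldsymbol u$ means conditioning on $S=s,\boldsymbol A=\boldsymbol a,\boldsymbol U=\boldsymbol u$. The fairness query of $h$ on $P$ is $$\digamma(P)=\frac{1}{|\mathrm{Dom}(\boldsymbol A)|}\sum_{\boldsymbol a\in\mathrm{Dom}(\boldsymbol A)}\Big|\Pr^+_P(h(\boldsymbol x)\mid S=s_1,\boldsymbol A=\boldsymbol a)-\Pr^+_P(h(\boldsymbol x)\mid S=s_0,\boldsymbol A=\boldsymbol a)\Big|.$$ *)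

From HB Require Import structures.
From mathcomp Require Import all_boot all_order all_algebra.
Set Implicit Arguments. Unset Strict Implicit. Unset Printing Implicit Defensive.
Import Order.TTheory GRing.Theory Num.Theory.
Local Open Scope ring_scope.

Definition Pr (R : numFieldType) (T : finType) (P : T -> R) (E : pred T) : R :=
  \sum_(t | E t) P t.

Definition condP (R : numFieldType) (T : finType) (P : T -> R) (E F : pred T) : R :=
  Pr P (predI E F) / Pr P F.

Definition is_dist (R : numFieldType) (T : finType) (P : T -> R) : Prop :=
  (forall t, 0 <= P t) /\ \sum_t P t = 1.

Definition cond_indep (R : numFieldType) (T : finType) (T1 T2 T3 : eqType)
  (P : T -> R) (X : T -> T1) (Y : T -> T2) (Z : T -> T3) : Prop :=
  forall x y z, 0 < Pr P (fun t => Z t == z) ->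
    condP P (fun t => (X t == x) && (Y t == y)) (fun t => Z t == z)
    = condP P (fun t => X t == x) (fun t => Z t == z)
      * condP P (fun t => Y t == y) (fun t => Z t == z).

Definition fmax (R : realDomainType) (T : finType) (f : T -> R) : R :=
  match [pick u : T] with Some u0 => \big[Num.max/f u0]_u f u | None => 0 end.
Definition fmin (R : realDomainType) (T : finType) (f : T -> R) : R :=
  match [pick u : T] with Some u0 => \big[Num.min/f u0]_u f u | None => 0 end.

(* Variables are indexed by option 'I_n : Some i = X_i, None = Y.
   Feature X_i has finite domain D i; Y has domain bool. *)
Section Vars.
Variables (n : nat) (D : 'I_n -> finType).

Definition vdom (v : option 'I_n) : finType :=
  match v with Some i => D i | None => bool end.

Definition XT : finType := {dffun forall i : 'I_n, D i}.
Definition pt : finType := (XT * bool)%type.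

Definition val_of (v : option 'I_n) (w : pt) : vdom v :=
  match v return vdom v with Some i => w.1 i | None => w.2 end.

Definition ifT (b : bool) (T : finType) : finType := if b then T else unit.

(* Dom(A) for a set A of variables: assignments of a value to each v \in A *)
Definition DomV (A : {set option 'I_n}) : finType :=
  {dffun forall v : option 'I_n, ifT (v \in A) (vdom v)}.

Definition projV (A : {set option 'I_n}) (w : pt) : DomV A :=
  [ffun v => match v \in A as b return ifT b (vdom v) with
             | true => val_of v w | false => tt end].

Definition ev_sa (iS : 'I_n) (s : D iS) (A : {set option 'I_n}) (a : DomV A)
  : pred pt := fun w => (w.1 iS == s) && (projV A w == a).
Definition ev_sau (iS : 'I_n) (s : D iS) (A U : {set option 'I_n})
  (a : DomV A) (u : DomV U) : pred pt :=
  fun w => [&& w.1 iS == s, projV A w == a & projV U w == u].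

Definition ev_h (h : XT -> bool) : pred pt := fun w => h w.1.

(* marginal of Omega on (X, Y): the target population *)
Definition margXY (R : numFieldType) (Om : pt * bool -> R) : pt -> R :=
  fun w => Pr Om (fun t => t.1 == w).

(* biased distribution Delta(x,y) = Omega(x,y | C = 1) *)
Definition Delta (R : numFieldType) (Om : pt * bool -> R) : pt -> R :=
  fun w => condP Om (fun t => t.1 == w) (fun t => t.2).

Definition fairness (R : realFieldType) (P : pt -> R) (h : XT -> bool)
  (iS : 'I_n) (s0 s1 : D iS) (A : {set option 'I_n}) : R :=
  (#|{: DomV A}|%:R)^-1 *
  \sum_(a : DomV A) `| condP P (ev_h h) (ev_sa s1 a) - condP P (ev_h h) (ev_sa s0 a) |.

End Vars.

From HB Require Import structures.
From mathcomp Require Import all_boot all_order all_algebra.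
From mathcomp Require Import ring.
Set Implicit Arguments. Unset Strict Implicit. Unset Printing Implicit Defensive.
Import Order.TTheory GRing.Theory Num.Theory.
Local Open Scope ring_scope.

(* Refining the event (S = s, A = a) by the value u of U writes
   Pr_Omega(h | s, a) as a mixture of the finer conditionals Pr_Omega(h | s, a, u)
   with weights Omega(s, a, u); a mixture lies between the smallest and the
   largest of its components.  The independence X _||_ C | S, A, U makes the
   selection ignorable on each cell: Pr_Delta(h | s, a, u) = Pr_Omega(h | s, a, u),
   the positivity hypothesis guaranteeing that these conditionals are defined.
   Hence min_u Pr_Delta(h | s, a, u) <= Pr_Omega(h | s, a) <= max_u Pr_Delta(h | s, a, u).
   Under the monotonicity hypothesis each absolute value in the fairness query
   is the difference Pr_Omega(h | s1, a) - Pr_Omega(h | s0, a), and the theorem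
   follows by bounding the two terms separately and averaging over a. *)

Section FiniteProbability.
Variables (R : realFieldType) (T : finType) (P : T -> R).
Hypothesis P_ge0 : forall t, 0 <= P t.

Lemma Pr_ext (E F : pred T) : E =1 F -> Pr P E = Pr P F.
Proof. by move=> EF; apply: eq_bigl. Qed.

Lemma condPE (E F : pred T) :
  condP P E F = Pr P (fun t => E t && F t) / Pr P F.
Proof. by []. Qed.

Lemma condP_ext (E1 E2 F1 F2 : pred T) :
  E1 =1 E2 -> F1 =1 F2 -> condP P E1 F1 = condP P E2 F2.
Proof.
move=> E12 F12; rewrite !condPE (Pr_ext F12); congr (_ / _).
by apply: Pr_ext => t; rewrite E12 F12.
Qed.

Lemma Pr_ge0 (E : pred T) : 0 <= Pr P E.
Proof. exact: sumr_ge0. Qed.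

Lemma Pr_sub (E F : pred T) : (forall t, E t -> F t) -> Pr P E <= Pr P F.
Proof.
move=> EF; rewrite /Pr [leLHS]big_mkcond [leRHS]big_mkcond /=.
apply: ler_sum => t _; case: (boolP (E t)) => [/EF -> //|_].
by case: (F t).
Qed.

Lemma dist_support : \sum_t P t = 1 -> exists t, P t != 0.
Proof.
move=> P_sum1; case: (pickP (fun t => P t != 0)) => [t Pt|P0]; first by exists t.
move: P_sum1; rewrite big1 => [/eqP|t _]; first by rewrite eq_sym oner_eq0.
by apply/eqP; rewrite -[_ == _]negbK P0.
Qed.

Lemma Pr_total (J : finType) (f : T -> J) (Q : pred J) (G : pred T) :
  Pr P (fun t => Q (f t) && G t) = \sum_(j | Q j) Pr P (fun t => (f t == j) && G t).
Proof.
rewrite /Pr (partition_big f Q) /=; last by move=> t /andP[].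
apply: eq_bigr => j Qj; apply: eq_bigl => t.
by case: eqP => [->|_]; rewrite ?Qj ?andbT ?andbF.
Qed.

Lemma Pr_pushforward (T' : finType) (f : T -> T') (G : pred T) (E : pred T') :
  Pr (fun w => Pr P (fun t => (f t == w) && G t)) E = Pr P (fun t => E (f t) && G t).
Proof. by rewrite [RHS]Pr_total. Qed.

(* Chain rule; a conditioning event of probability 0 yields 0 on both sides. *)
Lemma Pr_condP_mul (E F : pred T) :
  Pr P (fun t => E t && F t) = condP P E F * Pr P F.
Proof.
rewrite condPE; have [PF0|PF_neq0] := eqVneq (Pr P F) 0; last by rewrite divfK.
apply/eqP; rewrite PF0 mulr0 eq_le Pr_ge0 andbT -PF0.
by apply: Pr_sub => t /andP[].
Qed.

(* A conditional probability is a mixture of the conditional probabilities on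
   the cells G u of the partition of F by f, so it lies between their extremes. *)
Lemma condP_mixture (J : finType) (f : T -> J) (E F : pred T)
    (G : J -> pred T) (q : J -> R) :
  (forall u t, G u t = F t && (f t == u)) ->
  (forall u, q u = condP P E (G u)) -> 0 < Pr P F ->
  fmin q <= condP P E F <= fmax q.
Proof.
move=> G_cell q_cell PF_gt0.
have cells (H : pred T) : Pr P (fun t => H t && F t) = \sum_u Pr P (fun t => H t && G u t).
  rewrite (Pr_ext (F := fun t => predT (f t) && (H t && F t))) // Pr_total.
  by apply: eq_bigr => u _; apply: Pr_ext => t; rewrite G_cell andbC andbA.
have PF : Pr P F = \sum_u Pr P (G u) by rewrite (Pr_ext (F := fun t => predT t && F t)) ?cells.
have PEF : Pr P (fun t => E t && F t) = \sum_u q u * Pr P (G u).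
  by rewrite cells; apply: eq_bigr => u _; rewrite q_cell -Pr_condP_mul.
rewrite condPE PEF ler_pdivlMr // ler_pdivrMr // PF !mulr_sumr.
apply/andP; split; apply: ler_sum => u _; (apply: ler_wpM2r; first exact: Pr_ge0).
  by rewrite /fmin; case: pickP => [u0 _|/(_ u) //]; exact: bigmin_le.
by rewrite /fmax; case: pickP => [u0 _|/(_ u) //]; exact: le_bigmax.
Qed.

Lemma cond_indep_ignore (T1 : finType) (T2 T3 : eqType)
    (X : T -> T1) (Y : T -> T2) (Z : T -> T3) (F : pred T1) y z :
  cond_indep P X Y Z -> 0 < Pr P (fun t => (Y t == y) && (Z t == z)) ->
  condP P (fun t => F (X t)) (fun t => (Y t == y) && (Z t == z))
  = condP P (fun t => F (X t)) (fun t => Z t == z).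
Proof.
move=> XYZ_indep PYZ_gt0.
set pyz := Pr P _ in PYZ_gt0 *; set pz := Pr P (fun t => Z t == z).
have pz_gt0 : 0 < pz by apply: lt_le_trans PYZ_gt0 _; apply: Pr_sub => t /andP[].
have cell x : Pr P (fun t => (X t == x) && ((Y t == y) && (Z t == z))) * pz
            = Pr P (fun t => (X t == x) && (Z t == z)) * pyz.
  have := XYZ_indep x y z pz_gt0; rewrite !condPE.
  rewrite (Pr_ext (F := fun t => (X t == x) && ((Y t == y) && (Z t == z)))) => [|t];
    last by rewrite andbA.
  rewrite -/pz -/pyz => cond_eq; have pz_neq0 : pz != 0 by rewrite gt_eqF.
  set pxyz := Pr P _ in cond_eq *.
  by transitivity (pxyz / pz * pz * pz); [field | rewrite cond_eq; field].
apply/eqP; rewrite !condPE -/pz -/pyz eqr_div ?(gt_eqF pz_gt0) ?(gt_eqF PYZ_gt0) //.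
apply/eqP; rewrite !Pr_total !mulr_suml; exact: eq_bigr.
Qed.

End FiniteProbability.

Section SelectionBias.
Variables (R : realFieldType) (n : nat) (D : 'I_n -> finType).
Variable Om : pt D * bool -> R.
Hypothesis Om_ge0 : forall t, 0 <= Om t.

Lemma Pr_margXY (E : pred (pt D)) : Pr (margXY Om) E = Pr Om (fun t => E t.1).
Proof.
transitivity (Pr (fun w => Pr Om (fun t => (t.1 == w) && predT t)) E).
  by apply: eq_bigr => w _; apply: Pr_ext => t; rewrite andbT.
by rewrite Pr_pushforward; apply: Pr_ext => t; rewrite andbT.
Qed.

Lemma margXY_ge0 w : 0 <= margXY Om w.
Proof. exact: Pr_ge0 Om_ge0 _. Qed.

Lemma condP_margXY (E F : pred (pt D)) :
  condP (margXY Om) E F = condP Om (fun t => E t.1) (fun t => F t.1).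
Proof. by rewrite !condPE !Pr_margXY. Qed.

Lemma Pr_Delta (E : pred (pt D)) :
  Pr (Delta Om) E = Pr Om (fun t => E t.1 && t.2) / Pr Om (fun t => t.2).
Proof. by rewrite -Pr_pushforward /Pr mulr_suml. Qed.

Lemma condP_Delta (E F : pred (pt D)) : Pr Om (fun t => t.2) != 0 ->
  condP (Delta Om) E F = condP Om (fun t => E t.1) (fun t => F t.1 && t.2).
Proof.
move=> PC_neq0; rewrite !condPE !Pr_Delta invf_div mulrA divfK //.
by congr (_ / _); apply: Pr_ext => t; rewrite andbA.
Qed.

Lemma selection_ignorable (iS : 'I_n) (A U : {set option 'I_n})
    (s : D iS) (a : DomV D A) (u : DomV D U) (h : XT D -> bool) :
  cond_indep Om (fun t : pt D * bool => t.1.1) (fun t => t.2)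
    (fun t => (t.1.1 iS, projV A t.1, projV U t.1)) ->
  0 < Pr Om (fun t => ev_sau s a u t.1 && t.2) ->
  condP (Delta Om) (ev_h h) (ev_sau s a u) = condP (margXY Om) (ev_h h) (ev_sau s a u).
Proof.
move=> XC_indep cell_gt0.
set Zk := fun t : pt D * bool => (t.1.1 iS, projV A t.1, projV U t.1).
have cellE t : (Zk t == (s, a, u)) = ev_sau s a u t.1.
  by rewrite /ev_sau !xpair_eqE andbA.
have selected_cellE t : (t.2 == true) && (Zk t == (s, a, u)) = ev_sau s a u t.1 && t.2.
  by rewrite cellE eqb_id andbC.
have PC_neq0 : Pr Om (fun t => t.2) != 0.
  rewrite gt_eqF //; apply: lt_le_trans cell_gt0 _.
  by apply: (Pr_sub Om_ge0) => t /andP[].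
rewrite condP_Delta // condP_margXY.
transitivity (condP Om (fun t => h t.1.1) (fun t => (t.2 == true) && (Zk t == (s, a, u)))).
  by apply: condP_ext => t //; rewrite selected_cellE.
rewrite cond_indep_ignore //; first by apply: condP_ext => t //; rewrite cellE.
by rewrite (Pr_ext Om selected_cellE).
Qed.

Lemma target_between_biased (iS : 'I_n) (A U : {set option 'I_n})
    (s : D iS) (a : DomV D A) (h : XT D -> bool) (u0 : DomV D U) :
  cond_indep Om (fun t : pt D * bool => t.1.1) (fun t => t.2)
    (fun t => (t.1.1 iS, projV A t.1, projV U t.1)) ->
  (forall u : DomV D U, 0 < Pr Om (fun t => ev_sau s a u t.1 && t.2)) ->
  fmin (fun u : DomV D U => condP (Delta Om) (ev_h h) (ev_sau s a u))
  <= condP (margXY Om) (ev_h h) (ev_sa s a)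
  <= fmax (fun u : DomV D U => condP (Delta Om) (ev_h h) (ev_sau s a u)).
Proof.
move=> XC_indep cells_gt0.
apply: (condP_mixture margXY_ge0 (f := projV U) (G := fun u => ev_sau s a u)).
- by move=> u w; rewrite /ev_sau /ev_sa andbA.
- by move=> u; apply: selection_ignorable.
rewrite Pr_margXY; apply: lt_le_trans (cells_gt0 u0) _.
by apply: (Pr_sub Om_ge0) => t /andP[/and3P[s_eq a_eq _] _]; apply/andP.
Qed.

End SelectionBias.

Theorem proposition2 (R : realFieldType) (n : nat) (D : 'I_n -> finType)
  (Om : pt D * bool -> R) (HOm : is_dist Om)
  (iS : 'I_n) (s0 s1 : D iS) (Hs01 : s0 != s1)
  (HdomS : forall s : D iS, s = s0 \/ s = s1)
  (A : {set option 'I_n}) (HA : Some iS \notin A)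
  (h : XT D -> bool)
  (Hmon : forall a : DomV D A,
     condP (margXY Om) (ev_h h) (ev_sa s0 a)
       <= condP (margXY Om) (ev_h h) (ev_sa s1 a))
  (U : {set option 'I_n})
  (Hci : cond_indep Om (fun t : pt D * bool => t.1.1) (fun t => t.2)
           (fun t => (t.1.1 iS, projV A t.1, projV U t.1)))
  (Hpos : forall (s : D iS) (a : DomV D A) (u : DomV D U),
     0 < Pr Om (fun t => ev_sau s a u t.1 && t.2)) :
  0 <= fairness (margXY Om) h s0 s1 A /\
  fairness (margXY Om) h s0 s1 A <=
    (#|{: DomV D A}|%:R)^-1 *
    \sum_(a : DomV D A)
      (fmax (fun u : DomV D U => condP (Delta Om) (ev_h h) (ev_sau s1 a u))
       - fmin (fun u : DomV D U => condP (Delta Om) (ev_h h) (ev_sau s0 a u))).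
Proof.
case: HOm => Om_ge0 Om_sum1.
have [[w _] _] := dist_support Om_sum1.
have bounds s a := target_between_biased Om_ge0 h (projV U w) Hci (Hpos s a).
rewrite /fairness; split.
  by apply: mulr_ge0; [rewrite invr_ge0 | apply: sumr_ge0].
apply: ler_wpM2l; first by rewrite invr_ge0.
apply: ler_sum => a _; rewrite ger0_norm ?subr_ge0 //.
have /andP[_ le1] := bounds s1 a; have /andP[le0 _] := bounds s0 a.
exact: lerB.
Qed.
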